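(* Let $\mathcal{F}$ be a saturated fusion system on a $p$-group $S$ of nilpotency class two, and let $E$ be an essential subgroup of $\mathcal{F}$. Then $E\trianglelefteq S$, $[O^{p'}(\mathrm{Aut}_{\mathcal{F}}(E)),E]\le Z(E)$, and $E=C_S(Z(E))$.
   Context: $E\le S$ is essential in $\mathcal{F}$ if $E$ is $\mathcal{F}$-centric ($C_S(E\varphi)\le E\varphi$ for all $\varphi\in\mathrm{Hom}_{\mathcal{F}}(E,S)$), fully normalized, and $\mathrm{Out}_{\mathcal{F}}(E)=\mathrm{Aut}_{\mathcal{F}}(E)/\mathrm{Inn}(E)$ has a strongly $p$-embedded subgroup. *)

From mathcomp Require Import all_boot all_fingroup all_solvable.
Set Implicit Arguments. Unset Strict Implicit. Unset Printing Implicit Defensive.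
Import GroupScope.
Local Open Scope group_scope.

(* A (candidate) fusion system is a predicate  F P Q f  meaning
   "f restricted to P is a morphism in Hom_F(P,Q)".  Objects are subsets of
   gT that are subgroups of S; morphisms are functions gT -> gT, only their
   restriction to P matters. *)
Section Fusion.
Variable gT : finGroupType.
Implicit Types (S P Q R : {set gT}) (f g : gT -> gT).

Definition fus_pred := {set gT} -> {set gT} -> (gT -> gT) -> bool.

Definition is_inj_hom P Q f :=
  [/\ {in P &, {morph f : x y / x * y}}, {in P &, injective f} & f @: P \subset Q].

Record fusion_system (S : {group gT}) (F : fus_pred) : Prop := FusionSystem {
  fus_obj : forall P Q f, F P Q f ->
    [/\ group_set P, group_set Q, P \subset S & Q \subset S];
  fus_hom : forall P Q f, F P Q f -> is_inj_hom P Q f;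
  fus_ext : forall P Q f g, F P Q f -> {in P, f =1 g} -> F P Q g;
  fus_conj : forall P Q s, group_set P -> group_set Q -> P \subset S ->
    Q \subset S -> s \in S -> P :^ s \subset Q -> F P Q (conjg^~ s);
  fus_comp : forall P Q R f g, F P Q f -> F Q R g -> F P R (g \o f);
  fus_restr : forall P Q P' Q' f, F P Q f -> group_set P' -> P' \subset P ->
    group_set Q' -> Q' \subset S -> f @: P' \subset Q' -> F P' Q' f;
  fus_inv : forall P Q f, F P Q f ->
    exists g, F (f @: P) P g /\ {in P, cancel f g}
}.

Variables (S : {group gT}) (F : fus_pred).

Definition AutF P : {set {perm gT}} := [set a in Aut P | F P P a].

Definition AutS P : {set {perm gT}} :=
  [set a in Aut P | [exists s in 'N_S(P), [forall x in P, a x == x ^ s]]].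

Definition Inn P : {set {perm gT}} :=
  [set a in Aut P | [exists s in P, [forall x in P, a x == x ^ s]]].

Definition OutF P := (<<AutF P>> / <<Inn P>>%G)%g.

Definition F_conjugate P Q := exists f, F P Q f /\ f @: P = Q.

Definition fully_automized (p : nat) P := p.-Sylow(AutF P) (AutS P).

(* N_f = { g in N_S(Q) | f c_g f^{-1} in Aut_S(P) } *)
Definition N_ext P Q f : {set gT} :=
  [set s in 'N_S(Q) |
     [exists a in AutS P, [forall x in Q, f (x ^ s) == a (f x)]]].

Definition receptive P := forall Q f, F Q P f -> f @: Q = P ->
  exists fb, F (N_ext P Q f) S fb /\ {in Q, fb =1 f}.

(* saturation (Aschbacher--Kessar--Oliver, Def. I.2.2) *)
Definition saturated (p : nat) :=
  forall P : {group gT}, P \subset S ->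
    exists Q : {group gT}, [/\ F_conjugate P Q, fully_automized p Q & receptive Q].

Definition F_centric P :=
  forall f, F P S f -> 'C_S(f @: P) \subset f @: P.

Definition fully_normalized P :=
  forall f, F P S f -> #|'N_S(f @: P)| <= #|'N_S(P)|.

End Fusion.

Definition strongly_p_embedded (T : finGroupType) (p : nat) (G H : {set T}) :=
  [/\ H \proper G, p %| #|H| &
      forall x, x \in G :\: H -> p^'.-group (H :&: H :^ x)].

Definition essential (gT : finGroupType) (p : nat) (S : {group gT})
    (F : fus_pred gT) (E : {group gT}) :=
  [/\ E \subset S, F_centric S F E, fully_normalized S F E &
      exists H : {group _}, strongly_p_embedded p (OutF F E) H].

Definition Opp_res (T : finGroupType) (p : nat) (G : {group T}) : {set T} :=
  \bigcap_(N : {group T} | (N <| G) && p^'.-group (G / N)) N.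

Definition comm_aut (gT : finGroupType) (A : {set {perm gT}}) (E : {set gT})
  : {set gT} := <<[set x^-1 * (a : {perm gT}) x | x in E, a in A]>>.

From mathcomp Require Import all_boot all_fingroup all_solvable.
Import GroupScope.
Set Implicit Arguments. Unset Strict Implicit. Unset Printing Implicit Defensive.

(* As S has class two, conjugation by s in S moves each x of a subgroup P <= S
   by the central commutator [x, s], so Aut_S(P) acts trivially on P/Z(P).
   Saturation gives an F-conjugate Q of E with Aut_S(Q) Sylow in Aut_F(Q);
   transporting along E ~ Q, every p-subgroup of Aut_F(E) acts trivially on
   E/Z(E).  These automorphisms form a normal subgroup of p'-index, which
   therefore contains O^p'(Aut_F(E)).  Those acting trivially on both E/Z(E)
   and Z(E) form a normal p-subgroup of Aut_F(E), whose image in Out_F(E) is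
   trivial because Out_F(E) has a strongly p-embedded subgroup; so they are
   inner.  For s in C_S(Z(E)), conjugation by s is such an automorphism, hence
   s lies in E C_S(E) = E.  Finally [S, S] <= Z(S) <= C_S(E) <= E gives E <| S. *)

Lemma conj_closed_norm (T : finGroupType) (A B : {set T}) :
  (forall a b, a \in A -> b \in B -> a ^ b \in A) -> B \subset 'N(A).
Proof.
move=> AJ; apply/normsP => b Bb; apply/eqP; rewrite eqEcard cardJg leqnn andbT.
by apply/subsetP => c; rewrite mem_conjg => /AJ/(_ Bb); rewrite conjgKV.
Qed.

Lemma strongly_p_embedded_normal_pgroup (T : finGroupType) p (G H P : {group T}) :
  prime p -> strongly_p_embedded p G H -> P <| G -> p.-group P -> P :=: 1.
Proof.
move=> p_pr [ltHG pH p'HHx] nPG pP; have sHG := proper_sub ltHG.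
have p'sub (U : {group T}) x : x \in G -> x \notin H -> p.-group U ->
    U \subset H :&: H :^ x -> U :=: 1.
  move=> Gx notHx pU sU; apply/card1_trivg/(pnat_1 pU)/(pgroupS sU).
  by apply: p'HHx; rewrite inE notHx.
have [R sylR] := Sylow_exists p H; have [sRH pR _] := and3P sylR.
have ntR : R :!=: 1.
  rewrite -cardG_gt1 (card_Hall sylR) p_part_gt1 mem_primes p_pr cardG_gt0.
  exact: pH.
(* Otherwise R < P <*> R, and a p-group normalizer grows: some x in N(R) \ H
   gives R <= H :&: H :^ x. *)
have sPH : P \subset H.
  have nPR : R \subset 'N(P) := subset_trans (subset_trans sRH sHG) (normal_norm nPG).
  have pPR : p.-group (P <*> R) by rewrite norm_joinEr // pgroupM pP.
  have sPRG : P <*> R \subset G by rewrite join_subG normal_sub // (subset_trans sRH).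
  have PR_H : (P <*> R) :&: H :=: R.
    apply: (sub_pHall sylR); rewrite ?subsetIr //; first exact: pgroupS (subsetIl _ _) pPR.
    by rewrite subsetI joing_subr.
  have [eqR | ltR] := eqVproper (joing_subr P R).
    by rewrite (subset_trans (joing_subl P R)) // -eqR.
  have /properP[_ [x Nx notRx]] := nilpotent_proper_norm (pgroup_nil pPR) ltR.
  have [PRx NRx] := setIP Nx.
  have notHx : x \notin H by apply: contra notRx => Hx; rewrite -PR_H inE PRx.
  case/eqP: ntR; apply: (p'sub R x (subsetP sPRG x PRx) notHx pR).
  by rewrite subsetI sRH -(normP NRx) conjSg.
have /properP[_ [x Gx notHx]] := ltHG.
apply: (p'sub P x Gx notHx pP).
by rewrite subsetI sPH -(normP (subsetP (normal_norm nPG) x Gx)) conjSg.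
Qed.

Lemma Opp_res_sub_normal_Sylow (T : finGroupType) p (G N R : {group T}) :
  N <| G -> p.-Sylow(G) R -> R \subset N -> Opp_res p G \subset N.
Proof.
move=> nNG sylR sRN; apply: (bigcap_inf N); rewrite nNG /=.
rewrite /pgroup card_quotient ?normal_norm //.
have [_ _ p'iR] := and3P sylR.
apply: pnat_dvd p'iR.
by rewrite -(Lagrange_index (normal_sub nNG) sRN) dvdn_mulr.
Qed.

Lemma class2_conj_center (gT : finGroupType) (S P : {group gT}) x s :
  S^`(1) \subset 'Z(S) -> P \subset S -> x \in P -> s \in S -> x ^ s \in P ->
  x^-1 * x ^ s \in 'Z(P).
Proof.
move=> sS'Z sPS Px Ss Pxs; rewrite -commgEl.
have /centerP[_ cSxs] : [~ x, s] \in 'Z(S).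
  by apply: (subsetP sS'Z); rewrite mem_commg // (subsetP sPS).
apply/centerP; split=> [|y Py]; first by rewrite commgEl groupM ?groupV.
exact: cSxs (subsetP sPS y Py).
Qed.

Lemma der1_center_centric_normal (gT : finGroupType) (S E : {group gT}) :
  S^`(1) \subset 'Z(S) -> E \subset S -> 'C_S(E) \subset E -> E <| S.
Proof.
move=> sS'Z sES sCE; apply: (sub_der1_normal _ sES).
exact: subset_trans sS'Z (subset_trans (setIS S (centS sES)) sCE).
Qed.

Section SubgroupByPredicate.
Variables (T : finGroupType) (A : {group T}) (q : pred T).

Lemma group_set_pred : q 1 -> {in A &, forall a b, q a -> q b -> q (a * b)} ->
  group_set [set a in A | q a].
Proof.
move=> q1 qM; apply/group_setP; split=> [|a b]; first by rewrite inE group1 q1.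
by rewrite !inE => /andP[Aa qa] /andP[Ab qb]; rewrite groupM ?qM.
Qed.

Lemma normal_pred : {in A &, forall a b, q a -> q (a ^ b)} -> [set a in A | q a] <| A.
Proof.
move=> qJ; rewrite /normal setIdE subsetIl; apply: conj_closed_norm => a b.
by rewrite -setIdE !inE => /andP[Aa qa] Ab; rewrite groupJ ?qJ.
Qed.

End SubgroupByPredicate.

Section CentralAutomorphisms.
Variables (gT : finGroupType) (P : {group gT}).
Implicit Types (a b : {perm gT}) (A : {group {perm gT}}).

Definition central_aut a := [forall x in P, x^-1 * a x \in 'Z(P)].
Definition fixes_center a := [forall z in 'Z(P), a z == z].
Definition central_auts A := [set a in A | central_aut a].
Definition central_auts_fixZ A := [set a in A | central_aut a && fixes_center a].

Lemma central_autP a : reflect {in P, forall x, x^-1 * a x \in 'Z(P)} (central_aut a).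
Proof. exact: forall_inP. Qed.

Lemma fixes_centerP a : reflect {in 'Z(P), forall z, a z = z} (fixes_center a).
Proof. by apply: (iffP forall_inP) => fa z /fa; move/eqP. Qed.

Lemma Aut_center a z : a \in Aut P -> z \in 'Z(P) -> a z \in 'Z(P).
Proof.
move=> AutPa Zz; have /andP[_ /forall_inP charZ] := center_char P.
exact: subsetP (charZ a AutPa) _ (imset_f a Zz).
Qed.

Lemma central_aut1 : central_aut 1.
Proof. by apply/central_autP => x _; rewrite perm1 mulVg group1. Qed.

Lemma central_autM a b : b \in Aut P ->
  central_aut a -> central_aut b -> central_aut (a * b).
Proof.
move=> AutPb /central_autP ca /central_autP cb; apply/central_autP => x Px.
have Za := ca x Px; have Pa := subsetP (center_sub P) _ Za.
rewrite permM -{1}(mulKVg x (a x)) (morphicP (Aut_morphic AutPb)) //.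
by rewrite mulgA groupM ?cb ?Aut_center.
Qed.

Lemma central_autJ a b : b \in Aut P -> central_aut a -> central_aut (a ^ b).
Proof.
move=> AutPb /central_autP ca; apply/central_autP => x Px.
have AutPb' : b^-1 \in Aut P by rewrite groupV.
have Pbx : b^-1 x \in P by rewrite Aut_closed.
have Za := ca _ Pbx; have Pa := subsetP (center_sub P) _ Za.
rewrite conjgE !permM -(mulKVg (b^-1 x) (a _)) (morphicP (Aut_morphic AutPb)) //.
by rewrite permKV mulKg Aut_center.
Qed.

Lemma fixes_center1 : fixes_center 1.
Proof. by apply/fixes_centerP => z _; rewrite perm1. Qed.

Lemma fixes_centerM a b : fixes_center a -> fixes_center b -> fixes_center (a * b).
Proof.
move=> /fixes_centerP fa /fixes_centerP fb; apply/fixes_centerP => z Zz.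
by rewrite permM fa ?fb.
Qed.

Lemma fixes_centerJ a b : b \in Aut P -> fixes_center a -> fixes_center (a ^ b).
Proof.
move=> AutPb /fixes_centerP fa; apply/fixes_centerP => z Zz.
by rewrite conjgE !permM fa ?permKV // Aut_center ?groupV.
Qed.

Lemma central_aut_fixZ_expgE a n x : a \in Aut P -> central_aut a -> fixes_center a ->
  x \in P -> (a ^+ n) x = x * (x^-1 * a x) ^+ n.
Proof.
move=> AutPa /central_autP ca /fixes_centerP fa.
elim: n x => [|n IHn] x Px; first by rewrite !expg0 perm1 mulg1.
have Zz := ca x Px; have Pz := subsetP (center_sub P) _ Zz.
have AutPan : a ^+ n \in Aut P by rewrite groupX.
set z := x^-1 * a x in Zz Pz *; have ax : a x = x * z by rewrite mulKVg.
rewrite expgS permM ax (morphicP (Aut_morphic AutPan)) // IHn // (IHn _ Pz) (fa z Zz).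
rewrite mulVg expg1n mulg1 expgSr -/z; exact/esym/mulgA.
Qed.

Lemma central_aut_fixZ_expg_center a : a \in Aut P -> central_aut a -> fixes_center a ->
  a ^+ #|'Z(P)| = 1.
Proof.
move=> AutPa ca fa; apply: (eq_Aut (groupX _ AutPa) (group1 _)) => x Px.
by rewrite central_aut_fixZ_expgE // expg_cardG ?(central_autP _ ca) // mulg1 perm1.
Qed.

Variables (A : {group {perm gT}}).
Hypothesis sAAut : A \subset Aut P.

Lemma central_auts_group : group_set (central_auts A).
Proof.
apply: group_set_pred central_aut1 _ => a b _ Ab.
exact: central_autM (subsetP sAAut b Ab).
Qed.

Lemma central_auts_normal : central_auts A <| A.
Proof. by apply: normal_pred => a b _ Ab; apply: central_autJ (subsetP sAAut b Ab). Qed.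

Lemma central_auts_fixZ_group : group_set (central_auts_fixZ A).
Proof.
apply: group_set_pred; first by rewrite central_aut1 fixes_center1.
move=> a b _ Ab /andP[ca fa] /andP[cb fb].
by rewrite central_autM ?fixes_centerM ?(subsetP sAAut).
Qed.

Lemma central_auts_fixZ_normal : central_auts_fixZ A <| A.
Proof.
apply: normal_pred => a b _ Ab /andP[ca fa].
by rewrite central_autJ ?fixes_centerJ ?(subsetP sAAut).
Qed.

Lemma central_auts_fixZ_pgroup p : p.-group P -> p.-group (central_auts_fixZ A).
Proof.
move=> pP; apply/(@pgroupP _ _ (Group central_auts_fixZ_group)) => q q_pr q_dvd.
have [a /setIdP[Aa /andP[ca fa]] oa] := Cauchy q_pr q_dvd.
have : q %| #|'Z(P)|.
  by rewrite -oa order_dvdn central_aut_fixZ_expg_center ?(subsetP sAAut).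
by move/(pnat_dvd)/(_ (pgroupS (center_sub P) pP)); rewrite pnatE.
Qed.

End CentralAutomorphisms.

Lemma central_aut_Aut_isom (gT rT : finGroupType) (P : {group gT}) (Q : {group rT})
    (m : {morphism P >-> rT}) (injm : 'injm m) a :
  m @* P = Q -> a \in Aut P -> central_aut Q (Aut_isom injm (subxx P) a) ->
  central_aut P a.
Proof.
move=> imm AutPa /central_autP c_phi_a; apply/central_autP => x Px.
have Pax : x^-1 * a x \in P by rewrite groupM ?groupV ?Aut_closed.
rewrite -(injmK injm (center_sub P)) mem_morphpre // injm_center // imm.
rewrite morphM ?groupV ?Aut_closed // morphV // -(Aut_isomE injm (subxx P) AutPa Px).
by apply: c_phi_a; rewrite -imm mem_morphim.
Qed.

Section ConjugationAutomorphisms.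
Variables (gT : finGroupType) (P : {group gT}).

(* Both AutS S P (with N = 'N_S(P)) and Inn P (with N = P) unfold to sets of
   this shape. *)
Lemma conj_autsP (N : {set gT}) a :
  a \in [set a in Aut P | [exists s in N, [forall x in P, a x == x ^ s]]] ->
  a \in Aut P /\ exists2 s, s \in N & {in P, forall x, a x = x ^ s}.
Proof.
rewrite inE => /andP[AutPa /exists_inP[s Ns /forall_inP aJ]].
by split=> //; exists s => // x /aJ/eqP.
Qed.

Lemma group_set_conj_auts (N : {group gT}) : N \subset 'N(P) ->
  group_set [set a in Aut P | [exists s in N, [forall x in P, a x == x ^ s]]].
Proof.
move=> nPN; apply/group_setP; split.
  rewrite inE group1; apply/exists_inP; exists 1 => //.
  by apply/forall_inP => x _; rewrite perm1 conjg1.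
move=> a b /conj_autsP[AutPa [s Ns aJ]] /conj_autsP[AutPb [t Nt bJ]].
rewrite inE groupM //; apply/exists_inP; exists (s * t); rewrite ?groupM //.
apply/forall_inP => x Px.
by rewrite permM aJ // bJ ?conjgM // memJ_norm ?(subsetP nPN).
Qed.

Lemma AutS_group (S : {group gT}) : group_set (AutS S P).
Proof. exact: group_set_conj_auts (subsetIr S _). Qed.

Lemma Inn_group : group_set (Inn P).
Proof. exact: group_set_conj_auts (normG P). Qed.

Lemma Inn_conj a b : a \in Inn P -> b \in Aut P -> a ^ b \in Inn P.
Proof.
move=> /conj_autsP[AutPa [e Pe aJ]] AutPb.
rewrite inE groupJ //; apply/exists_inP; exists (b e); first by rewrite Aut_closed.
apply/forall_inP => x Px; have Pbx : b^-1 x \in P by rewrite Aut_closed ?groupV.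
rewrite conjgE !permM aJ // -!(autmE AutPb) morphJ //=.
by rewrite (autmE AutPb) permKV.
Qed.

Lemma Aut_norm_Inn : Aut P \subset 'N(<<Inn P>>).
Proof.
apply: subset_trans (norm_gen _); apply: conj_closed_norm => a b Inn_a AutPb.
exact: Inn_conj.
Qed.

End ConjugationAutomorphisms.

Lemma AutS_central_aut (gT : finGroupType) (S Q : {group gT}) a :
  S^`(1) \subset 'Z(S) -> Q \subset S -> a \in AutS S Q -> central_aut Q a.
Proof.
move=> sS'Z sQS /conj_autsP[_ [s /setIP[Ss nQs] aJ]]; apply/central_autP => x Qx.
by rewrite aJ // (class2_conj_center sS'Z sQS Qx Ss) ?memJ_norm.
Qed.

Section FusionSystemBasics.
Variables (gT : finGroupType) (S : {group gT}) (F : fus_pred gT).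
Hypothesis FS : fusion_system S F.
Implicit Types (P Q : {group gT}) (f : gT -> gT).

Lemma fus_conj_in P Q s : P \subset S -> Q \subset S -> s \in S -> P :^ s \subset Q ->
  F P Q (conjg^~ s).
Proof. move=> sPS sQS Ss sPsQ; exact: (fus_conj FS (groupP P) (groupP Q) sPS sQS Ss sPsQ). Qed.

Lemma fus_incl P : P \subset S -> F P S id.
Proof.
move=> sPS; have FPS := fus_conj_in sPS (subxx S) (group1 S).
rewrite conjsg1 in FPS; apply: (fus_ext FS (FPS sPS)) => x _.
by rewrite conjg1.
Qed.

Lemma fus_id P : P \subset S -> F P P id.
Proof.
move=> sPS; apply: (fus_restr FS (fus_incl sPS) (groupP P) (subxx P) (groupP P) sPS).
by rewrite imset_id.
Qed.

Lemma centric_centralizer P : P \subset S -> F_centric S F P -> 'C_S(P) \subset P.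
Proof. by move=> sPS /(_ id (fus_incl sPS)); rewrite imset_id. Qed.

Lemma AutF_sub_Aut (P : {set gT}) : AutF F P \subset Aut P.
Proof. by apply/subsetP => a /setIdP[]. Qed.

Lemma AutF_group P : P \subset S -> group_set (AutF F P).
Proof.
move=> sPS; apply/group_setP; split=> [|a b /setIdP[AutPa Fa] /setIdP[AutPb Fb]].
  rewrite inE group1; by apply: (fus_ext FS (fus_id sPS)) => x _; rewrite perm1.
rewrite inE groupM //; apply: (fus_ext FS (fus_comp FS Fa Fb)) => x _.
by rewrite permM.
Qed.

Lemma conj_aut_AutF P s : P \subset S -> s \in 'N_S(P) -> conj_aut P s \in AutF F P.
Proof.
move=> sPS /setIP[Ss nPs]; rewrite inE Aut_aut.
have FPP := fus_conj_in sPS sPS Ss; rewrite (normP nPs) in FPP.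
by apply: (fus_ext FS (FPP (subxx P))) => x Px; rewrite norm_conj_autE.
Qed.

Lemma fus_morphic P Q f : F P Q f -> morphic P f.
Proof. by case/(fus_hom FS) => fM _ _; apply/morphicP. Qed.

Lemma fus_injm P Q f (fPQ : F P Q f) : 'injm (morphm_morphism (fus_morphic fPQ)).
Proof.
case/(fus_hom FS): (fPQ) => _ injf _; apply/injmP => x y Px Py.
by rewrite /= !morphmE; apply: injf.
Qed.

Lemma fus_morphim P Q f (fPQ : F P Q f) : morphm_morphism (fus_morphic fPQ) @* P = f @: P.
Proof. exact: morphimEdom. Qed.

Lemma AutF_Aut_isom P Q f (fPQ : F P Q f) a : f @: P = Q ->
  a \in AutF F P -> Aut_isom (fus_injm fPQ) (subxx P) a \in AutF F Q.
Proof.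
move=> imfP /setIdP[AutPa Fa]; set m := morphm_morphism _.
have imm : m @* P = Q by rewrite fus_morphim.
have [g [Fg fK]] := fus_inv FS fPQ; rewrite imfP in Fg.
rewrite inE -{1}imm Aut_Aut_isom; apply: (fus_ext FS (fus_comp FS (fus_comp FS Fg Fa) fPQ)).
rewrite -imfP => _ /imsetP[x Px ->] /=.
by rewrite fK // -[f x]/(m x) Aut_isomE.
Qed.

End FusionSystemBasics.

Section ClassTwoFusion.
Variables (gT : finGroupType) (p : nat) (S : {group gT}) (F : fus_pred gT).
Hypotheses (p_pr : prime p) (pS : p.-group S) (sS'Z : S^`(1) \subset 'Z(S)).
Hypotheses (FS : fusion_system S F) (satF : saturated S F p).

Lemma pgroup_AutF_central_aut (E : {group gT}) (T : {group {perm gT}}) :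
  E \subset S -> T \subset AutF F E -> p.-group T -> {in T, forall a, central_aut E a}.
Proof.
move=> sES sTA pT a Ta.
have [Q [[f [fEQ imfE]] autQ _]] := satF sES.
have [_ _ _ sQS] := fus_obj FS fEQ.
have AutEa : a \in Aut E := subsetP (AutF_sub_Aut F E) a (subsetP sTA a Ta).
set phi := Aut_isom (fus_injm FS fEQ) (subxx E).
have sphiTA : phi @* T \subset AutF F Q.
  apply/subsetP => _ /morphimP[b _ Tb ->].
  exact: AutF_Aut_isom (subsetP sTA b Tb).
have [c AQc sphiTAS] :=
  Sylow_subJ (autQ : p.-Sylow(Group (AutF_group FS sQS)) (Group (AutS_group Q S)))
    sphiTA (morphim_pgroup _ pT).
apply: (central_aut_Aut_isom (Q := Q) (injm := fus_injm FS fEQ) _ AutEa).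
  by rewrite fus_morphim.
change (central_aut Q (phi a)).
have : phi a \in AutS S Q :^ c by apply: (subsetP sphiTAS); rewrite mem_morphim.
rewrite mem_conjg => /(AutS_central_aut sS'Z sQS) c_phi_a.
rewrite -(conjgKV c (phi a)); apply: central_autJ c_phi_a.
exact: subsetP (AutF_sub_Aut F Q) c AQc.
Qed.

Variable E : {group gT}.
Hypothesis essE : essential p S F E.

Let sES : E \subset S. Proof. by case: essE. Qed.

Let AutF_gen : <<AutF F E>> = AutF F E.
Proof. exact: gen_set_id (AutF_group FS sES). Qed.

Let sAutF_Aut : <<AutF F E>> \subset Aut E.
Proof. by rewrite AutF_gen AutF_sub_Aut. Qed.

Lemma essential_centralizer : 'C_S(E) \subset E.
Proof. by have [_ cenE _ _] := essE; apply: (centric_centralizer FS sES cenE). Qed.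

Lemma essential_normal : E <| S.
Proof. exact: (der1_center_centric_normal sS'Z sES essential_centralizer). Qed.

Lemma essential_Opp_res_central :
  comm_aut (Opp_res p [group of <<AutF F E>>]) E \subset 'Z(E).
Proof.
set A := [group of <<AutF F E>>].
have nNA : central_auts E A <| A := central_auts_normal sAutF_Aut.
have [R sylR] := Sylow_exists p A.
have sRN : R \subset central_auts E A.
  have sRA : R \subset AutF F E by rewrite -AutF_gen (pHall_sub sylR).
  apply/subsetP => a Ra; rewrite inE (subsetP (pHall_sub sylR) a Ra).
  exact: (pgroup_AutF_central_aut sES sRA (pHall_pgroup sylR) Ra).
have sOpp := Opp_res_sub_normal_Sylow (N := Group (central_auts_group sAutF_Aut)) nNA sylR sRN.
rewrite /comm_aut gen_subG; apply/subsetP => _ /imset2P[x a Ex Oa ->].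
have /setIdP[_ /central_autP c_a] := subsetP sOpp a Oa.
exact: c_a.
Qed.

Lemma essential_central_fixZ_Inn :
  central_auts_fixZ E [group of <<AutF F E>>] \subset <<Inn E>>.
Proof.
have [_ _ _ [H speH]] := essE.
set A := [group of <<AutF F E>>]; set K := Group (central_auts_fixZ_group sAutF_Aut).
have nIA : A \subset 'N(<<Inn E>>) := subset_trans sAutF_Aut (Aut_norm_Inn E).
have nIK : K \subset 'N(<<Inn E>>).
  exact: subset_trans (normal_sub (central_auts_fixZ_normal sAutF_Aut)) nIA.
have pK : p.-group K := central_auts_fixZ_pgroup sAutF_Aut (pgroupS sES pS).
rewrite -(quotient_sub1 nIK).
rewrite (strongly_p_embedded_normal_pgroup (G := (A / <<Inn E>>%G)%G) (P := (K / _)%G)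
  p_pr speH) //.
  exact: (quotient_normal _ (central_auts_fixZ_normal sAutF_Aut)).
exact: quotient_pgroup.
Qed.

Lemma essential_centralizer_center : 'C_S('Z(E)) \subset E.
Proof.
apply/subsetP => s /setIP[Ss cZs].
have nEs : s \in 'N(E) := subsetP (normal_norm essential_normal) s Ss.
have NSs : s \in 'N_S(E) by rewrite inE Ss nEs.
have c_fixZ : conj_aut E s \in central_auts_fixZ E [group of <<AutF F E>>].
  rewrite inE mem_gen ?(conj_aut_AutF FS sES NSs) //=; apply/andP; split.
    apply/central_autP => x Ex; rewrite norm_conj_autE //.
    by rewrite (class2_conj_center sS'Z sES Ex Ss) ?memJ_norm.
  apply/fixes_centerP => z Zz; rewrite norm_conj_autE ?(subsetP (center_sub E)) //.
  by apply/conjg_fixP/commgP/esym/(centP cZs).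
have /conj_autsP[_ [e Ee c_e]] : conj_aut E s \in Inn E.
  by rewrite -(gen_set_id (Inn_group E)) (subsetP essential_central_fixZ_Inn).
have cEse : s * e^-1 \in 'C_S(E).
  apply/setIP; split; first by rewrite groupM ?groupV // (subsetP sES).
  apply/centP => x Ex.
  by apply/esym/commgP/conjg_fixP; rewrite conjgM -(norm_conj_autE nEs Ex) c_e // conjgK.
by rewrite -(mulgVK e s) groupM // (subsetP essential_centralizer).
Qed.

End ClassTwoFusion.

Unset Implicit Arguments. Set Strict Implicit.

Theorem mainTheorem18 (gT : finGroupType) (p : nat) (S : {group gT})
    (F : fus_pred gT) (E : {group gT}) :
  prime p -> p.-group S -> nil_class S = 2 ->
  fusion_system S F -> saturated S F p ->
  essential p S F E ->
  [/\ E <| S,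
      comm_aut (Opp_res p [group of <<AutF F E>>]) E \subset 'Z(E) &
      E :=: 'C_S('Z(E))].
Proof.
move=> p_pr pS clS2 FS satF essE.
have sS'Z : S^`(1) \subset 'Z(S) by rewrite -nil_class2 clS2.
have [sES _ _ _] := essE.
split.
- exact: (essential_normal sS'Z FS essE).
- exact: (essential_Opp_res_central sS'Z FS satF essE).
apply/eqP; rewrite eqEsubset (essential_centralizer_center p_pr pS sS'Z FS essE).
by rewrite subsetI sES centsC subsetIr.
Qed.
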